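(* Let $I$ and $J$ be componentwise polymatroidal monomial ideals in $K[x,y]$. Then $IJ$ is also componentwise polymatroidal. In particular, all powers of a componentwise polymatroidal ideal in $K[x,y]$ are componentwise polymatroidal.
   Context: $G(I)$ is the minimal monomial generating set. A monomial ideal generated in a single degree is polymatroidal if for all $u,v\in G(I)$ and all variables $z$ with $\deg_{z}(u)>\deg_{z}(v)$ ($\deg_z$ = exponent of $z$) there exists a variable $w$ with $\deg_{w}(u)<\deg_{w}(v)$ and $w(u/z)\in I$. $I_{\langle j\rangle}$ is the ideal generated by all degree-$j$ monomials of $I$; $I$ is componentwise polymatroidal if every nonzero $I_{\langle j\rangle}$ is polymatroidal. *)

From mathcomp Require Import all_boot.
Set Implicit Arguments. Unset Strict Implicit. Unset Printing Implicit Defensive.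

(* Monomials of K[x,y]: exponent vectors indexed by the two variables 'I_2
   (x = variable 0, y = variable 1). A monomial ideal is identified with the
   set of monomials it contains (a monomial ideal is spanned by its monomials). *)
Definition mon := {ffun 'I_2 -> nat}.

Definition mdeg (u : mon) : nat := \sum_(i < 2) u i.
Definition mdvd (u v : mon) : Prop := forall i, u i <= v i.
Definition mmul (u v : mon) : mon := [ffun i => u i + v i].
Definition one_mon : mon := [ffun _ => 0].
(* w (u / z) : the exponent of z lowered by one, that of w raised by one *)
Definition mexch (u : mon) (z w : 'I_2) : mon :=
  [ffun i => (u i - (i == z)) + (i == w)].

Definition is_monideal (I : mon -> Prop) : Prop :=
  forall u v, I u -> mdvd u v -> I v.

Definition mingen (I : mon -> Prop) (u : mon) : Prop :=
  I u /\ forall v, I v -> mdvd v u -> v = u.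

Definition polymatroidal (I : mon -> Prop) : Prop :=
  (exists d, forall u, mingen I u -> mdeg u = d) /\
  forall u v (z : 'I_2), mingen I u -> mingen I v -> v z < u z ->
    exists w : 'I_2, u w < v w /\ I (mexch u z w).

Definition comp (I : mon -> Prop) (j : nat) : mon -> Prop :=
  fun m => exists u, I u /\ mdeg u = j /\ mdvd u m.

Definition cw_polymatroidal (I : mon -> Prop) : Prop :=
  forall j, (exists m, comp I j m) -> polymatroidal (comp I j).

Definition mprod (I J : mon -> Prop) : mon -> Prop :=
  fun m => exists u v, I u /\ J v /\ m = mmul u v.

Fixpoint mpow (I : mon -> Prop) (n : nat) : mon -> Prop :=
  match n with
  | 0 => fun _ => True
  | k.+1 => mprod I (mpow I k)
  end.

From Pilot Require Import Defs.
From mathcomp Require Import all_boot zify.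
Set Implicit Arguments. Unset Strict Implicit. Unset Printing Implicit Defensive.

(* In two variables a monomial of degree k is determined by its exponent t in
   a chosen variable z, so the degree-k part of a monomial set Q is encoded by
   the "slice" {t <= k | z^t (z')^(k-t) \in Q}, z' the other variable.

   1. Q is componentwise polymatroidal iff every slice of Q is an interval of
      nat (exchange z -> z' is exactly a step of the interval towards 0).
   2. For monomial ideals I, J the j-th slice of IJ is the union over i <= j of
      the sumsets  slice I i + slice J (j-i).  Sumsets of intervals are
      intervals, and any two of these sumsets meet: since slices of an ideal
      grow with the degree, for i <= i' the element s + r with s in slice I i
      and r in slice J (j-i') lies in both.  A union of pairwise meeting
      intervals is an interval, so IJ is again componentwise polymatroidal.
   3. Monomial ideals are closed under products, and the statement about
      powers follows by induction (the zeroth power is the unit ideal). *)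

Definition var_x : 'I_2 := @Ordinal 2 0 isT.
Definition var_y : 'I_2 := @Ordinal 2 1 isT.
Definition other (z : 'I_2) : 'I_2 := if z == var_x then var_y else var_x.

Lemma var_cases (i : 'I_2) : i = var_x \/ i = var_y.
Proof. by case: i => [[|[|//]] Hi]; [left | right]; apply/val_inj. Qed.

Lemma var_or_other (z i : 'I_2) : i = z \/ i = other z.
Proof. by case: (var_cases z) => ->; case: (var_cases i) => ->; auto. Qed.

Lemma other_neq (z : 'I_2) : (other z == z) = false.
Proof. by case: (var_cases z) => ->. Qed.

Lemma mdeg_split (z : 'I_2) (u : mon) : mdeg u = u z + u (other z).
Proof.
have -> : mdeg u = u var_x + u var_y.
  by rewrite /mdeg big_ord_recl big_ord_recl big_ord0 addn0; congr (u _ + u _); apply/val_inj.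
by case: (var_cases z) => ->; rewrite /other /=; lia.
Qed.

Lemma mon_ext (z : 'I_2) (u v : mon) :
  u z = v z -> u (other z) = v (other z) -> u = v.
Proof. by move=> hz ho; apply/ffunP => i; case: (var_or_other z i) => ->. Qed.

Definition mon2 (z : 'I_2) (a b : nat) : mon := [ffun i => if i == z then a else b].

Lemma mon2_z z a b : mon2 z a b z = a.
Proof. by rewrite ffunE eqxx. Qed.

Lemma mon2_other z a b : mon2 z a b (other z) = b.
Proof. by rewrite ffunE other_neq. Qed.

Lemma mdeg_mon2 z a b : mdeg (mon2 z a b) = a + b.
Proof. by rewrite (mdeg_split z) mon2_z mon2_other. Qed.

Lemma mon2_of (z : 'I_2) (u : mon) (k : nat) :
  mdeg u = k -> mon2 z (u z) (k - u z) = u.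
Proof. by rewrite (mdeg_split z) => du; apply: (@mon_ext z); rewrite ?mon2_z ?mon2_other; lia. Qed.

Lemma mexch_other (u : mon) (z : 'I_2) :
  0 < u z -> mexch u z (other z) = mon2 z (u z).-1 (u (other z)).+1.
Proof.
move=> uz; have zo : (z == other z) = false by rewrite eq_sym other_neq.
by apply: (@mon_ext z); rewrite ?mon2_z ?mon2_other !ffunE eqxx ?zo ?other_neq /=; lia.
Qed.

Lemma mdvd_trans (u v w : mon) : mdvd u v -> mdvd v w -> mdvd u w.
Proof. by move=> uv vw i; exact: leq_trans (uv i) (vw i). Qed.

Lemma mdeg_mdvd (u v : mon) : mdvd u v -> mdeg u <= mdeg v.
Proof. by move=> uv; rewrite !(mdeg_split var_x); have := uv var_x; have := uv (other var_x); lia. Qed.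

Lemma mdvd_mdeg_eq (u v : mon) : mdvd u v -> mdeg u = mdeg v -> u = v.
Proof.
move=> uv; rewrite !(mdeg_split var_x) => e.
by apply: (@mon_ext var_x); have := uv var_x; have := uv (other var_x); lia.
Qed.

Lemma mingen_comp (Q : mon -> Prop) (k : nat) (u : mon) :
  mingen (Defs.comp Q k) u <-> Q u /\ mdeg u = k.
Proof.
split.
  move=> [[m [Qm [dm mu]]] minu].
  have em : m = u by apply: minu => //; exists m; do !split.
  by rewrite -em.
move=> [Qu du]; split; first by exists u; do !split.
move=> v [m [Qm [dm mv]]] vu.
have mu : m = u by apply: mdvd_mdeg_eq; [exact: mdvd_trans mv vu | rewrite du].
apply: mdvd_mdeg_eq => //; apply/eqP; rewrite eqn_leq mdeg_mdvd //=.
by rewrite -mu mdeg_mdvd.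
Qed.

Definition convex (X : nat -> Prop) : Prop :=
  forall c a t, X c -> X a -> c <= t -> t <= a -> X t.

Lemma convex_of_step (X : nat -> Prop) :
  (forall c a, X c -> X a -> c < a -> X a.-1) -> convex X.
Proof.
move=> step c a t Xc Xa ct ta.
suff down : forall d b, X b -> b = t + d -> X t by apply: (down (a - t) a) => //; lia.
elim=> [|d IH] b Xb eb; first by rewrite eb addn0 in Xb.
by apply: (IH b.-1); [apply: step Xc Xb _ | ]; lia.
Qed.

Definition slice (Q : mon -> Prop) (z : 'I_2) (k t : nat) : Prop :=
  t <= k /\ Q (mon2 z t (k - t)).

Definition slices_convex (Q : mon -> Prop) : Prop :=
  forall z k, convex (slice Q z k).

Lemma slice_of (Q : mon -> Prop) (z : 'I_2) (u : mon) (k : nat) :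
  Q u -> mdeg u = k -> slice Q z k (u z).
Proof.
move=> Qu du; split; last by rewrite (mon2_of z du).
by move: du; rewrite (mdeg_split z); lia.
Qed.

(* Slices of a monomial ideal grow with the degree (multiply by z'). *)
Lemma slice_mono (I : mon -> Prop) (z : 'I_2) (k k' t : nat) :
  is_monideal I -> k <= k' -> slice I z k t -> slice I z k' t.
Proof.
move=> mI kk' [tk It]; split; first lia.
by apply: (mI _ _ It) => i; rewrite !ffunE; case: (i == z); lia.
Qed.

(* Componentwise polymatroidal sets have interval slices: the exchange axiom
   applied to z^c (z')^(k-c) and z^a (z')^(k-a), c < a, yields z^(a-1). *)
Lemma slices_convex_of_cw (Q : mon -> Prop) :
  cw_polymatroidal Q -> slices_convex Q.
Proof.
move=> cwQ z k; apply: convex_of_step => c a [ck Qc] [ak Qa] ca.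
have mu : mingen (Defs.comp Q k) (mon2 z a (k - a)) by apply/mingen_comp; rewrite mdeg_mon2; split => //; lia.
have mv : mingen (Defs.comp Q k) (mon2 z c (k - c)) by apply/mingen_comp; rewrite mdeg_mon2; split => //; lia.
have [_ exch] := cwQ k (ex_intro _ _ (proj1 mu)).
have [w [lt_w [m [Qm [dm mdv]]]]] := exch _ _ z mu mv ltac:(by rewrite !mon2_z).
case: (var_or_other z w) => ew; subst w; first by rewrite !mon2_z in lt_w; lia.
rewrite mexch_other mon2_z ?mon2_other in mdv; last lia.
have em : m = mon2 z a.-1 (k - a).+1 by apply: mdvd_mdeg_eq; rewrite // mdeg_mon2; lia.
split; first lia.
have -> : k - a.-1 = (k - a).+1 by lia.
by rewrite -em.
Qed.

Lemma cw_of_slices_convex (Q : mon -> Prop) :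
  slices_convex Q -> cw_polymatroidal Q.
Proof.
move=> cvQ j _; split; first by exists j => u /mingen_comp [].
move=> u v z /mingen_comp [Qu du] /mingen_comp [Qv dv] lt_z.
have su := slice_of z Qu du; have sv := slice_of z Qv dv.
have eu := mdeg_split z u; have ev := mdeg_split z v.
have [_ Qe] := cvQ z j _ _ (u z).-1 sv su ltac:(lia) ltac:(lia).
exists (other z); split; first lia.
rewrite mexch_other; last lia.
exists (mon2 z (u z).-1 (j - (u z).-1)); split => //; split; first by rewrite mdeg_mon2; lia.
by move=> i; rewrite !ffunE; case: (i == z); lia.
Qed.

Lemma convex_sumset (X Y : nat -> Prop) : convex X -> convex Y ->
  convex (fun t => exists s r, X s /\ Y r /\ t = s + r).
Proof.
move=> cX cY; apply: convex_of_step => c a [c1 [c2 [Xc1 [Yc2 ->]]]] [a1 [a2 [Xa1 [Ya2 ->]]]] lt_ca.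
case: (ltnP c1 a1) => h.
  exists a1.-1, a2; split; last by split => //; lia.
  by apply: (cX c1 a1) => //; lia.
exists a1, a2.-1; split => //; split; last lia.
by apply: (cY c2 a2) => //; lia.
Qed.

Lemma convex_union (D : nat -> Prop) (P : nat -> nat -> Prop) :
  (forall i, convex (P i)) ->
  (forall i i' p q, D i -> D i' -> P i p -> P i' q -> exists m, P i m /\ P i' m) ->
  convex (fun t => exists i, D i /\ P i t).
Proof.
move=> cP meet c a t [i [Di Pc]] [i' [Di' Pa]] ct ta.
have [m [Pm Pm']] := meet _ _ _ _ Di Di' Pc Pa.
case: (leqP t m) => tm; first by exists i; split => //; apply: (cP i c m).
by exists i'; split => //; apply: (cP i' m a) => //; lia.
Qed.

Section Product.

Variables I J : mon -> Prop.
Hypotheses (mI : is_monideal I) (mJ : is_monideal J).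

Definition piece (z : 'I_2) (j i t : nat) : Prop :=
  exists s r, slice I z i s /\ slice J z (j - i) r /\ t = s + r.

Lemma slice_mprod (z : 'I_2) (j t : nat) :
  slice (mprod I J) z j t <-> exists i, i <= j /\ piece z j i t.
Proof.
split.
  move=> [tj [u [v [Iu [Jv e]]]]].
  have ez : t = u z + v z by rewrite -(mon2_z z t (j - t)) e ffunE.
  have eo : j - t = u (other z) + v (other z) by rewrite -(mon2_other z t (j - t)) e ffunE.
  have du := mdeg_split z u; have dv := mdeg_split z v.
  exists (mdeg u); split; first lia.
  by exists (u z), (v z); split; [exact: slice_of | split => //; apply: slice_of => //; lia].
move=> [i [ij [s [r [[si Is] [[rj Jr] ->]]]]]]; split; first lia.
exists (mon2 z s (i - s)), (mon2 z r (j - i - r)); split => //; split => //.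
by apply: (@mon_ext z); rewrite [mmul _ _ _]ffunE ?mon2_z ?mon2_other; lia.
Qed.

(* Two pieces meet: s from the lower I-degree plus r from the higher one. *)
Lemma pieces_meet (z : 'I_2) (j i i' p q : nat) :
  i <= i' -> piece z j i p -> piece z j i' q ->
  exists m, piece z j i m /\ piece z j i' m.
Proof.
move=> ii' [s [_ [Is [_ _]]]] [_ [r [_ [Jr _]]]].
have Jr' : slice J z (j - i) r by apply: (slice_mono mJ _ Jr); lia.
have Is' : slice I z i' s by exact: (slice_mono mI ii' Is).
by exists (s + r); split; exists s, r.
Qed.

Lemma slices_convex_mprod :
  slices_convex I -> slices_convex J -> slices_convex (mprod I J).
Proof.
move=> cvI cvJ z j c a t.
rewrite !slice_mprod; apply: convex_union => [i | i i' p q _ _ Pp Pq].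
  exact: convex_sumset.
case: (leqP i i') => h; first exact: pieces_meet Pp Pq.
have [m [Pm' Pm]] := pieces_meet (ltnW h) Pq Pp.
by exists m.
Qed.

Lemma monideal_mprod : is_monideal (mprod I J).
Proof.
move=> m m' [u [v [Iu [Jv ->]]]] dvd.
exists u, [ffun i => v i + (m' i - (u i + v i))]; split => //; split.
  by apply: mJ Jv _ => i; rewrite ffunE leq_addr.
by apply/ffunP => i; have := dvd i; rewrite /mmul !ffunE => le_uv; rewrite addnA subnKC.
Qed.

End Product.

Lemma slices_convex_mpow (I : mon -> Prop) (n : nat) :
  is_monideal I -> slices_convex I ->
  is_monideal (mpow I n) /\ slices_convex (mpow I n).
Proof.
move=> mI cvI; elim: n => [|n [mIn cvIn]] /=.
  by split => // z k c a t [ck _] [ak _] ct ta; split => //; lia.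
by split; [exact: monideal_mprod | exact: slices_convex_mprod].
Qed.

Theorem corollary2p13 :
  (forall I J : mon -> Prop, is_monideal I -> is_monideal J ->
     cw_polymatroidal I -> cw_polymatroidal J ->
     cw_polymatroidal (mprod I J)) /\
  (forall I : mon -> Prop, is_monideal I -> cw_polymatroidal I ->
     forall n : nat, 0 < n -> cw_polymatroidal (mpow I n)).
Proof.
split=> [I J mI mJ cwI cwJ | I mI cwI n _].
  by apply/cw_of_slices_convex/slices_convex_mprod => //; exact: slices_convex_of_cw.
have [_ cvIn] := slices_convex_mpow n mI (slices_convex_of_cw cwI).
exact: cw_of_slices_convex.
Qed.
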